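(* Let $k\in\mathbb Z$, $\mathbb N_k=\{l\in\mathbb Z:l\le k\}$, and $\xi$ a random variable with $\mathbb P(\xi=l)=p_l$, $l\in\mathbb N_k$, $p_l\ge0$, $\sum_lp_l=1$, $p_k\in(0,1)$. Let $r_i=\sum_{j\le k-i}p_j$ for integers $i\ge1$. Fix $N\ge1$, let $Z$ be the Markov chain on $\Omega_k$ described in the context, $\bar\nu_N$ its invariant distribution and $\phi(m)=\sup\{i\in\mathbb N_k:m_i>0\}$. Then for each $i\ge2$, $$\bar\nu_N(\phi\le k-i)\le\Big(\frac{r_i}{r_1}\Big)^N\bar\nu_N(\phi\le k-1).$$
   Context: $\Omega_k=\{m\in\{0,\dots,N\}^{\mathbb N_k}:\sum_{i\in\mathbb N_k}m_i=N\}$. The chain $Z$ on $\Omega_k$ has the kernel: from state $m$, take any $x\in\mathbb Z^N$ with exactly $m_l$ coordinates equal to $l$ for each $l\in\mathbb N_k$, let $\{\xi_{i,j}:1\le i,j\le N\}$ be fresh i.i.d. copies of $\xi$, and let the next state be $\big(\#\{i\le N:\max_j(x_j+\xi_{i,j})=\phi(m)+l\}\big)_{l\in\mathbb N_k}$. (Equivalently, $Z_l(t)=\#\{j:X_j(t)=\max_iX_i(t-1)+l\}$ for the particle system $X_i(t+1)=\max_j\{X_j(t)+\xi_{i,j}(t+1)\}$.) $\bar\nu_N$ is its unique invariant probability distribution. *)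

From mathcomp Require Import all_boot all_order all_algebra.
From mathcomp Require Import boolp classical_sets reals constructive_ereal ereal esum.
Unset Printing Implicit Defensive.
Import Order.TTheory GRing.Theory Num.Theory.
Local Open Scope ring_scope.
Local Open Scope classical_set_scope.

Definition Nk (k : int) : set int := [set l | l <= k].

(* A function on N_k is
   represented by m : int -> nat vanishing outside N_k; the (necessarily
   finitely supported) sum is computed over a finite duplicate-free list
   containing the support. *)
Definition Omega (N : nat) (k : int) : set (int -> nat) :=
  [set m | (forall l, k < l -> m l = 0%N) /\ (forall l, (m l <= N)%N) /\
     exists s : seq int, [/\ uniq s, (forall l, (m l != 0)%N -> l \in s) &
                              (\sum_(l <- s) m l)%N = N]].

Definition cnt (N : nat) (x : 'I_N -> int) (l : int) : nat :=
  #|[set j | x j == l]|.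

Definition phi (k : int) (m : int -> nat) : int :=
  xget k [set s : int | [/\ s <= k, (0 < m s)%N &
                             forall l, l <= k -> (0 < m l)%N -> l <= s]].

Definition rep (N : nat) (k : int) (m : int -> nat) : 'I_N -> int :=
  xget (fun=> k) [set x : 'I_N -> int | forall l, l <= k -> cnt N x l = m l].

Definition next (N : nat) (k : int) (m : int -> nat)
    (xi : 'I_N -> 'I_N -> int) : int -> nat :=
  let x := rep N k m in
  fun l => if l <= k then
    #|[set i : 'I_N | [exists j, x j + xi i j == phi k m + l] &&
                      [forall j, x j + xi i j <= phi k m + l]]|
  else 0%N.

Definition kernel (R : realType) (p : int -> R) (N : nat) (k : int)
    (m m' : int -> nat) : \bar R :=
  \esum_(xi in [set xi : 'I_N -> 'I_N -> int |
                 (forall i j, xi i j <= k) /\ next N k m xi = m'])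
     (\prod_(i < N) \prod_(j < N) p (xi i j))%:E.

Definition invariant_distribution (R : realType) (p : int -> R) (N : nat)
    (k : int) (nu : (int -> nat) -> \bar R) : Prop :=
  [/\ (forall m, (0 <= nu m)%E),
      (forall m, ~ Omega N k m -> nu m = 0%E),
      (\esum_(m in Omega N k) nu m = 1%E) &
      (forall m', Omega N k m' ->
         nu m' = \esum_(m in Omega N k) (nu m * kernel R p N k m m')%E)].

Definition nu_phi_le (N : nat) (k : int) (R : realType)
    (nu : (int -> nat) -> \bar R) (a : int) : \bar R :=
  \esum_(m in Omega N k `&` [set m | phi k m <= a]) nu m.

Definition r (R : realType) (p : int -> R) (k i : int) : R :=
  fine (\esum_(j in [set j : int | j <= k - i]) (p j)%:E).

(* Given the current state m, realised by positions x with max x = phi(m), the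
   event {phi(Z') <= a} says that every entry of the N x N array xi satisfies
   xi_{ij} <= phi(m) + a - x_j.  Its probability therefore factorises into a
   product of N^2 tail sums of p.  Lowering a from k - 1 to k - i shrinks every
   factor, and in each row the factor of a column j with x_j = phi(m) drops from
   exactly r_1 to r_i, so P_m(phi(Z') <= k - i) <= (r_i / r_1)^N P_m(phi(Z') <= k - 1)
   for every m; integrating against the invariant nu gives the claim. *)

From Pilot Require Import Defs.
From mathcomp Require Import all_boot all_order all_algebra.
From mathcomp Require Import boolp classical_sets functions reals constructive_ereal ereal esum.
From mathcomp Require Import fsbigop cardinality zify lra.
Import Order.TTheory GRing.Theory Num.Theory.
Local Open Scope ring_scope.
Local Open Scope classical_set_scope.

Section ExtendedSums.
Context {R : realType} {T : choiceType}.
Local Open Scope ereal_scope.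

Lemma esumZl (I : set T) (a : T -> \bar R) (c : R) :
  (0 <= c)%R -> (forall i, 0 <= a i) ->
  \esum_(i in I) (c%:E * a i) = c%:E * \esum_(i in I) a i.
Proof.
move=> c_ge0 a_ge0; rewrite /esum -ereal_supZl //; last first.
  by apply/set0P; exists 0, set0; [exact: fsets_set0 | rewrite fsbig_set0].
congr ereal_sup; apply/seteqP; split => x /=.
  move=> [A AI <-]; exists (\sum_(i \in A) a i); first by exists A.
  by case: AI => finA _; rewrite !fsbig_finite // ge0_sume_distrr.
move=> [_ [A AI <-] <-]; exists A => //.
by case: AI => finA _; rewrite !fsbig_finite // ge0_sume_distrr.
Qed.

Lemma ge0_subset_esum {I J : set T} {a : T -> \bar R} :
  I `<=` J -> (forall i, 0 <= a i) ->
  \esum_(i in I) a i <= \esum_(i in J) a i.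
Proof.
move=> IJ a_ge0; rewrite esum_mkcond [leRHS]esum_mkcond.
apply: le_esum => i _; case: ifPn => [/set_mem/IJ Ji|_]; last by case: ifP.
by rewrite ifT // inE.
Qed.

Lemma exchange_esum (T' : choiceType) (I : set T) (J : set T')
    (a : T -> T' -> \bar R) : (forall i j, 0 <= a i j) ->
  \esum_(i in I) \esum_(j in J) a i j = \esum_(j in J) \esum_(i in I) a i j.
Proof.
move=> a_ge0; rewrite !esum_esum //.
rewrite (reindex_esum (J `*` I) _ (fun x => (x.2, x.1))) //; split => /=.
- by move=> [i j] [].
- by move=> [i1 i2] [j1 j2] _ _ [-> ->].
- by move=> [i j] [Ii Jj]; exists (j, i).
Qed.

End ExtendedSums.

Section ProductOfSums.
Context {R : realType} {T : finType} {U : choiceType} (u0 : U).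
Context (A : T -> set U) (g : T -> U -> \bar R).
Hypotheses (g_ge0 : forall t u, (0 <= g t u)%E)
  (g_fin : forall t u, g t u \is a fin_num)
  (esum_fin : forall t, \esum_(u in A t) g t u \is a fin_num).
Local Open Scope ereal_scope.

(* Fixing the value [u0] outside [s] makes [funs_on s] a copy of the product
   of the [A t], [t \in s]. *)
Definition funs_on (s : seq T) : set (T -> U) :=
  [set f | forall t, (t \in s -> A t (f t)) /\ (t \notin s -> f t = u0)].

Definition upd_fun (t0 : T) (z : U * (T -> U)) : T -> U :=
  fun t => if t == t0 then z.1 else z.2 t.

Lemma set_bij_upd_fun t0 s : t0 \notin s ->
  set_bij (A t0 `*`` (fun=> funs_on s)) (funs_on (t0 :: s)) (upd_fun t0).
Proof.
move=> t0s; split.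
- move=> [u f] [/= Au fs] t; rewrite /upd_fun /= inE negb_or.
  case: eqVneq => [-> //|tt0] /=; exact: fs.
- move=> [u1 f1] [u2 f2] /set_mem[/= _ f1s] /set_mem[/= _ f2s] e12.
  have := congr1 (fun f => f t0) e12; rewrite /upd_fun /= eqxx => ->.
  congr pair; apply/funext => t; case: (eqVneq t t0) => [->|tt0].
    by rewrite (f1s t0).2 // (f2s t0).2.
  by have := congr1 (fun f => f t) e12; rewrite /upd_fun /= (negPf tt0).
- move=> f fs; exists (f t0, fun t => if t == t0 then u0 else f t); last first.
    by apply/funext => t; rewrite /upd_fun /=; case: eqVneq => [->|].
  split => /=; first by apply: (fs t0).1; rewrite inE eqxx.
  move=> t; case: eqVneq => [-> | tt0]; first by split => // /(negP t0s).
  by split => ts; [apply: (fs t).1 | apply: (fs t).2]; rewrite inE (negPf tt0).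
Qed.

Lemma esum_funs_on s : uniq s ->
  \esum_(f in funs_on s) \prod_(t <- s) g t (f t) =
  \prod_(t <- s) \esum_(u in A t) g t u.
Proof.
elim: s => [_ | t0 s IH /= /andP[t0s /IH {}IH]].
  have -> : funs_on [::] = [set fun=> u0].
    apply/seteqP; split => [f f0 | f -> t] /=; last by split.
    by apply/funext => t; rewrite (f0 t).2.
  by rewrite esum_set1 ?big_nil.
have prod_ge0 f : 0 <= \prod_(t <- s) g t (f t) by rewrite prode_ge0.
have prod_fin : (\prod_(t <- s) \esum_(u in A t) g t u) \is a fin_num.
  exact: prode_fin_num.
rewrite (reindex_esum _ _ _ _ (set_bij_upd_fun _ _ t0s)).
rewrite (eq_esum (b := fun z => g t0 z.1 * \prod_(t <- s) g t (z.2 t))); last first.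
  move=> [u f] _; rewrite big_cons /upd_fun /= eqxx; congr (_ * _).
  by apply: eq_big_seq => t ts; case: eqVneq ts t0s => // ->->.
rewrite -(esum_esum (a := fun u f => g t0 u * \prod_(t <- s) g t (f t))); last first.
  by move=> u f _ _; rewrite mule_ge0.
have inner u : \esum_(f in funs_on s) (g t0 u * \prod_(t <- s) g t (f t)) =
    (\prod_(t <- s) \esum_(u in A t) g t u) * g t0 u.
  by rewrite -[g t0 u]fineK // esumZl ?fine_ge0 // IH muleC.
rewrite (eq_esum (fun u _ => inner u)) -(fineK prod_fin) esumZl ?fine_ge0 ?prode_ge0 //.
  by rewrite fineK // big_cons muleC.
by move=> t _; exact: esum_ge0.
Qed.

Lemma esum_prod_fun :
  \esum_(f in [set f : T -> U | forall t, A t (f t)]) \prod_t g t (f t) =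
  \prod_t \esum_(u in A t) g t u.
Proof.
rewrite -esum_funs_on ?index_enum_uniq //; congr esum.
apply/seteqP; split => f /= fA t; last by apply: (fA t).1; rewrite mem_index_enum.
by split => // /negP; rewrite mem_index_enum.
Qed.

End ProductOfSums.

Lemma card_mkset (T : finType) (P : pred T) : #|[set j | P j]| = #|P|.
Proof. by apply: eq_card => j; rewrite /in_mem /= /in_set asboolb. Qed.

Lemma cntE N (x : 'I_N -> int) l : cnt N x l = #|[pred j | x j == l]|.
Proof. exact: card_mkset. Qed.

Lemma sum_card_fibers (T : finType) (T' : eqType) (f : T -> T') (s : seq T') :
  uniq s -> (\sum_(l <- s) #|[pred j | f j == l]|)%N = #|[pred j | f j \in s]|.
Proof.
move=> s_uniq; rewrite -sum1_card [RHS]big_mkcond /=.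
under eq_bigr => l _ do rewrite -sum1_card big_mkcond /=.
rewrite exchange_big /=; apply: eq_bigr => j _.
rewrite inE /= -[RHS]/(nat_of_bool (f j \in s)) -(count_uniq_mem _ s_uniq).
by rewrite -sum1_count [RHS]big_mkcond /=; apply: eq_bigr => l _; rewrite inE eq_sym.
Qed.

Lemma ord_argmax {N : nat} (N_gt0 : (0 < N)%N) (f : 'I_N -> int) :
  exists j0, forall j, f j <= f j0.
Proof.
have [j0 _ j0_max] := @arg_maxP _ _ _ (Ordinal N_gt0) predT f isT.
by exists j0 => j; apply: j0_max.
Qed.

Lemma cnt_gt0 N (x : 'I_N -> int) l : (0 < cnt N x l)%N <-> exists j, x j = l.
Proof.
rewrite cntE; split=> [/card_gt0P[j] | [j <-]].
  by rewrite inE => /eqP; exists j.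
by apply/card_gt0P; exists j; rewrite inE.
Qed.

Lemma phi_cnt {N : nat} {k : int} {x : 'I_N -> int} {j0 : 'I_N} :
  (forall j, x j <= k) -> (forall j, x j <= x j0) -> phi k (cnt N x) = x j0.
Proof.
move=> x_le_k x_le_j0; apply: (@xget_unique _ k) => [|y [_ /cnt_gt0[j <-] j_max]].
  by split=> [||l _ /cnt_gt0[j <-]] //; apply/cnt_gt0; exists j0.
by apply/le_anti; rewrite x_le_j0 j_max //; apply/cnt_gt0; exists j0.
Qed.

Lemma Omega_cnt N k (x : 'I_N -> int) :
  (forall j, x j <= k) -> Omega N k (cnt N x).
Proof.
move=> x_le_k; split=> [l kl | ].
  rewrite cntE; apply: eq_card0 => j; rewrite inE; apply/negP => /eqP xl.
  by have := x_le_k j; rewrite xl leNgt kl.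
split=> [l | ]; first by rewrite cntE -[leqRHS]card_ord max_card.
exists (undup [seq x j | j <- index_enum 'I_N]); split; first exact: undup_uniq.
  move=> l; rewrite -lt0n => /cnt_gt0[j <-].
  by rewrite mem_undup map_f // mem_index_enum.
under eq_bigr do rewrite cntE.
rewrite sum_card_fibers ?undup_uniq // -[RHS]card_ord; apply: eq_card => j.
by rewrite !inE mem_undup map_f // mem_index_enum.
Qed.

Section Representative.
Context {N : nat} {k : int} {m : int -> nat}.
Hypothesis Om : Omega N k m.

Let x := rep N k m.

Lemma cnt_rep_le : forall l, l <= k -> cnt N x l = m l.
Proof.
have [_ [_ [s [s_uniq m_supp sum_m]]]] := Om.
pose t := flatten [seq nseq (m l) l | l <- s].
have size_t : size t = N.
  rewrite size_flatten /shape -map_comp -sum_m sumnE big_map.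
  by apply: eq_bigr => l _ /=; rewrite size_nseq.
apply: (@xgetPex _ (fun=> k) (fun x => forall l, l <= k -> cnt N x l = m l)).
exists (fun j : 'I_N => nth k t j) => l' _; rewrite cntE -sum1_card.
have -> : (\sum_(j in [pred j : 'I_N | nth k t j == l']) 1)%N = count (pred1 l') t.
  rewrite -sum1_count (big_nth k) size_t big_mkord [RHS]big_mkcond.
  by rewrite [LHS]big_mkcond; apply: eq_bigr => j _; rewrite inE.
rewrite /t count_flatten -map_comp sumnE big_map /=.
rewrite (eq_bigr (fun l => if l == l' then m l else 0%N)); last first.
  by move=> l _; rewrite count_nseq /=; case: eqP; rewrite ?mul1n ?mul0n.
rewrite -big_mkcond /=; have [l's | l'Ns] := boolP (l' \in s).
  by rewrite -big_filter filter_pred1_uniq // big_seq1.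
have /eqP ml' : m l' == 0%N by apply: contraNT l'Ns; exact: m_supp.
by rewrite ml' big1 // => l /eqP ->.
Qed.

Lemma rep_le j : x j <= k.
Proof.
have [m_gt_k [_ [s [s_uniq m_supp sum_m]]]] := Om.
pose sk := [seq l <- s | l <= k].
have : #|[pred j | x j \in sk]| = N.
  rewrite -sum_card_fibers ?filter_uniq //; apply: etrans sum_m; rewrite big_filter.
  rewrite [RHS](bigID (fun l => l <= k)) /= [X in _ = _ + X]big1.
    by rewrite addr0; apply: eq_bigr => l lk; rewrite -cntE cnt_rep_le.
  by move=> l; rewrite -ltNge => /m_gt_k.
rewrite -[N in _ = N]card_ord => /subset_cardP/(_ (subset_predT _))/(_ j).
by rewrite !inE mem_filter => /andP[].
Qed.

Lemma cnt_rep : cnt N x = m.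
Proof.
apply/funext => l; have [lk | kl] := leP l k; first exact: cnt_rep_le.
rewrite Om.1 //; apply/eqP; rewrite -leqn0 leqNgt; apply/negP => /cnt_gt0[j xjl].
by have := rep_le j; rewrite xjl leNgt kl.
Qed.

Hypothesis N_gt0 : (0 < N)%N.

Lemma phi_rep : exists j0, phi k m = x j0 /\ forall j, x j <= x j0.
Proof.
have [j0 j0_max] := ord_argmax N_gt0 x.
by exists j0; rewrite -cnt_rep (phi_cnt rep_le j0_max).
Qed.

Lemma rep_le_phi j : x j <= phi k m.
Proof. by have [j0 [-> j0_max]] := phi_rep; exact: j0_max. Qed.

End Representative.

Section NextState.
Context {N : nat} {k : int} {m : int -> nat} {xi : 'I_N -> 'I_N -> int}.
Hypotheses (N_gt0 : (0 < N)%N) (Om : Omega N k m).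
Hypothesis xi_le : forall i j, xi i j <= k.

Let x := rep N k m.
Let x_le_phi j : x j <= phi k m := rep_le_phi Om N_gt0 j.

Lemma next_cnt : exists g : 'I_N -> int,
  [/\ forall i j, x j + xi i j <= phi k m + g i,
      forall i, exists j, x j + xi i j = phi k m + g i,
      forall i, g i <= k &
      Defs.next N k m xi = cnt N g].
Proof.
have /choice[jmax jmax_ge] : forall i, exists j0, forall j,
    x j + xi i j <= x j0 + xi i j0 by move=> i; exact: ord_argmax.
(* [g i] is the new position of particle [i] relative to the old maximum. *)
exists (fun i => x (jmax i) + xi i (jmax i) - phi k m); split.
- by move=> i j; have := jmax_ge i j; lia.
- by move=> i; exists (jmax i); lia.
- by move=> i; have := x_le_phi (jmax i); have := xi_le i (jmax i); lia.
apply/funext => l; rewrite /Defs.next -/x cntE card_mkset; case: ifPn => [lk | kl].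
  apply: eq_card => i; rewrite !inE /=; apply/idP/idP.
    move=> /andP[/existsP[j /eqP xij] /forallP all_le]; apply/eqP.
    by have := all_le (jmax i); have := jmax_ge i j; lia.
  move=> /eqP gil; apply/andP; split; first by apply/existsP; exists (jmax i); apply/eqP; lia.
  by apply/forallP => j; have := jmax_ge i j; lia.
apply/esym/eq_card0 => i; rewrite inE; apply/negP => /eqP gil; move: kl; rewrite -ltNge.
by have := x_le_phi (jmax i); have := xi_le i (jmax i); lia.
Qed.

Lemma Omega_next : Omega N k (Defs.next N k m xi).
Proof. by have [g [_ _ g_le ->]] := next_cnt; exact: Omega_cnt. Qed.

Lemma phi_next_le a :
  phi k (Defs.next N k m xi) <= a <-> forall i j, x j + xi i j <= phi k m + a.
Proof.
have [g [g_ge g_attained g_le ->]] := next_cnt.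
have [imax imax_max] := ord_argmax N_gt0 g; rewrite (phi_cnt g_le imax_max).
split=> [ga i j | all_le]; first by have := g_ge i j; have := imax_max i; lia.
by have [j xij] := g_attained imax; have := all_le imax j; lia.
Qed.

End NextState.

Lemma prod_le_ratio (R : realFieldType) n (u v : 'I_n -> R) j0 :
  (forall j, 0 <= u j <= v j) -> 0 < v j0 ->
  \prod_j u j <= u j0 / v j0 * \prod_j v j.
Proof.
move=> uv v0_gt0; rewrite (bigD1 j0) //= [X in _ <= _ * X](bigD1 j0) //=.
rewrite [leRHS]mulrA divfK ?gt_eqF //; apply: ler_wpM2l; first by case/andP: (uv j0).
by apply: ler_prod => j _; exact: uv.
Qed.

Section EventProbability.
Variables (R : realType) (p : int -> R) (N : nat) (k : int).
Hypotheses (p_ge0 : forall l, 0 <= p l) (N_gt0 : (0 < N)%N).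
Local Open Scope ereal_scope.

Definition weight (xi : 'I_N -> 'I_N -> int) : \bar R :=
  (\prod_(i < N) \prod_(j < N) p (xi i j))%:E.

Definition entry_range m a (j : 'I_N) : set int :=
  [set l | l <= k /\ rep N k m j + l <= phi k m + a]%R.

Definition phi_next_le_event m a : set ('I_N -> 'I_N -> int) :=
  [set xi | forall i j, entry_range m a j (xi i j)].

Lemma weight_ge0 xi : 0 <= weight xi.
Proof. by rewrite lee_fin; apply: prodr_ge0 => i _; apply: prodr_ge0. Qed.

Lemma esum_kernel_phi_le m a : Omega N k m ->
  \esum_(m' in Omega N k `&` [set m' | phi k m' <= a]%R) kernel R p N k m m' =
  \esum_(xi in phi_next_le_event m a) weight xi.
Proof.
move=> Om; rewrite /kernel esum_esum; last by move=> *; exact: weight_ge0.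
rewrite (reindex_esum (phi_next_le_event m a) _ (fun xi => (Defs.next N k m xi, xi))) //.
have xi_le xi : phi_next_le_event m a xi -> forall i j, (xi i j <= k)%R.
  by move=> xi_ev i j; have [] := xi_ev i j.
split=> [xi xi_ev | xi1 xi2 _ _ [] // | [m' xi] [[_ phi_m'] [xik next_xi]]] /=.
- split; last by split=> //; exact: xi_le.
  split; first exact: Omega_next N_gt0 Om (xi_le _ xi_ev).
  by apply/(phi_next_le N_gt0 Om (xi_le _ xi_ev)) => i j; have [] := xi_ev i j.
- exists xi; last by rewrite next_xi.
  move=> i j; split=> //; move: i j.
  by apply/(phi_next_le N_gt0 Om xik); rewrite next_xi.
Qed.


Hypothesis p_fin : \esum_(l in Nk k) (p l)%:E \is a fin_num.

Lemma esum_p_fin (S : set int) : S `<=` Nk k -> \esum_(l in S) (p l)%:E \is a fin_num.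
Proof.
have pE_ge0 l : 0 <= (p l)%:E by rewrite lee_fin.
move=> SNk; rewrite ge0_fin_numE ?esum_ge0 //.
by apply: le_lt_trans (ge0_subset_esum SNk pE_ge0) _; rewrite -ge0_fin_numE ?esum_ge0.
Qed.

Lemma esum_weight_event m a :
  \esum_(xi in phi_next_le_event m a) weight xi =
  \prod_(i < N) \prod_(j < N) \esum_(l in entry_range m a j) (p l)%:E.
Proof.
have row_esum : \esum_(v in [set v | forall j, entry_range m a j (v j)])
    \prod_j (p (v j))%:E = \prod_j \esum_(l in entry_range m a j) (p l)%:E.
  by apply: (esum_prod_fun 0%R) => // j; apply: esum_p_fin => l [].
rewrite -(eq_bigr _ (fun i _ => row_esum)).
have weightE xi : weight xi = \prod_i \prod_j (p (xi i j))%:E.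
  by rewrite /weight -prodEFin; apply: eq_bigr => i _; rewrite prodEFin.
under eq_esum do rewrite weightE.
apply: (esum_prod_fun (fun=> 0%R)) => [i v | i v | i].
- by apply: prode_ge0 => j _; rewrite lee_fin.
- by apply: prode_fin_num.
- by rewrite row_esum; apply: prode_fin_num => j _; apply: esum_p_fin => l [].
Qed.

Lemma entry_range_top m a j0 : rep N k m j0 = phi k m -> (a <= k)%R ->
  entry_range m a j0 = [set l | l <= a]%R.
Proof.
move=> j0_top ak; apply/seteqP; split=> l /=; rewrite /entry_range j0_top /=.
  by move=> [_]; lia.
by move=> la; split; lia.
Qed.

Lemma event_ratio_le m i : Omega N k m -> (1 <= i)%R -> (0 < r R p k 1)%R ->
  \esum_(xi in phi_next_le_event m (k - i)) weight xi <=
  ((r R p k i / r R p k 1) ^+ N)%:E *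
    \esum_(xi in phi_next_le_event m (k - 1)) weight xi.
Proof.
move=> Om i_ge1 r1_gt0; rewrite !esum_weight_event.
have entry_fin a j : \esum_(l in entry_range m a j) (p l)%:E \is a fin_num.
  by apply: esum_p_fin => l [].
pose u a j := fine (\esum_(l in entry_range m a j) (p l)%:E).
have prodE a : \prod_(i < N) \prod_(j < N) (\esum_(l in entry_range m a j) (p l)%:E) =
    (\prod_(i < N) \prod_(j < N) u a j)%:E.
  rewrite -prodEFin; apply: eq_bigr => i' _; rewrite -prodEFin.
  by apply: eq_bigr => j _; rewrite fineK.
rewrite !prodE -EFinM lee_fin.
have u_mono j : (0 <= u (k - i) j <= u (k - 1) j)%R.
  have pE_ge0 l : 0 <= (p l)%:E by rewrite lee_fin.
  rewrite fine_ge0 ?esum_ge0 //=; apply: fine_le => //.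
  by apply: ge0_subset_esum => // l [lk]; split=> //; lia.
have [j0 [phiE _]] := phi_rep Om N_gt0.
have u_top a : (a <= k)%R -> u a j0 = fine (\esum_(l in [set l | l <= a]%R) (p l)%:E).
  by move=> ak; rewrite /u entry_range_top.
have -> : ((r R p k i / r R p k 1) ^+ N = \prod_(i' < N) (u (k - i) j0 / u (k - 1) j0))%R.
  by rewrite prodr_const card_ord !u_top //; lia.
rewrite -big_split /=; apply: ler_prod => i' _.
rewrite prodr_ge0 => [|j _]; last by case/andP: (u_mono j).
by apply: prod_le_ratio => //; rewrite u_top //; lia.
Qed.

End EventProbability.

Arguments weight {R} p {N} xi.

Section InvariantDistribution.
Context {R : realType} {p : int -> R} {N : nat} {k : int}.
Context {nu : (int -> nat) -> \bar R}.
Hypotheses (p_ge0 : forall l, 0 <= p l) (N_gt0 : (0 < N)%N).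
Hypothesis nu_inv : invariant_distribution R p N k nu.
Local Open Scope ereal_scope.

Lemma invariant_distribution_fin m : nu m \is a fin_num.
Proof.
have [nu_ge0 nu_out nu_1 _] := nu_inv.
have [Om | /nu_out -> //] := pselect (Omega N k m).
rewrite ge0_fin_numE // (le_lt_trans _ (ltry 1)) // -nu_1.
by apply: esum_ge; exists [set m]; [split=> [|_ ->]; [exact: finite_set1|] | rewrite fsbig_set1].
Qed.

Lemma nu_phi_leE a : nu_phi_le N k R nu a =
  \esum_(m in Omega N k) (nu m * \esum_(xi in phi_next_le_event N k m a) weight p xi).
Proof.
have [nu_ge0 _ _ nu_stat] := nu_inv.
rewrite /nu_phi_le (eq_esum (b := fun m' =>
  \esum_(m in Omega N k) (nu m * kernel R p N k m m'))); last by move=> m' [/nu_stat].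
rewrite exchange_esum; last first.
  by move=> m m'; rewrite mule_ge0 // esum_ge0 // => xi _; exact: weight_ge0.
apply: eq_esum => m Om; rewrite -[nu m]fineK ?invariant_distribution_fin //.
rewrite esumZl ?fine_ge0 ?esum_kernel_phi_le // => m'.
by rewrite esum_ge0 // => *; exact: weight_ge0.
Qed.

End InvariantDistribution.

Lemma r1E (R : realType) (p : int -> R) k : (forall l, 0 <= p l) ->
  (\esum_(l in Nk k) (p l)%:E = 1)%E -> r R p k 1 = 1 - p k.
Proof.
move=> p_ge0 p_sum; have pE_ge0 l : (0 <= (p l)%:E)%E by rewrite lee_fin.
have := esumID [set k] (Nk k) _ (fun l _ => pE_ge0 l).
have -> : Nk k `&` [set k] = [set k].
  by apply/seteqP; split=> [l [] // | l /= ->]; split=> //; rewrite /Nk /=.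
have -> : Nk k `&` ~` [set k] = [set l | l <= k - 1].
  by apply/seteqP; split=> l /=; rewrite /Nk /=; [move=> [? ?] | move=> ?; split]; lia.
have r1_fin : \esum_(l in [set l | l <= k - 1]) (p l)%:E \is a fin_num.
  rewrite ge0_fin_numE ?esum_ge0 //; apply: le_lt_trans (ge0_subset_esum (J := Nk k) _ pE_ge0) _.
  - by move=> l /=; rewrite /Nk /=; lia.
  - by rewrite p_sum ltry.
by rewrite p_sum esum_set1 // -(fineK r1_fin) => -[r1]; rewrite /r; lra.
Qed.

Theorem lemma6p2 (R : realType) (k : int) (p : int -> R)
  (p_ge0 : forall l, 0 <= p l)
  (p_supp : forall l, k < l -> p l = 0)
  (p_sum : (\esum_(l in Nk k) (p l)%:E = 1)%E)
  (pk_pos : 0 < p k) (pk_lt1 : p k < 1)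
  (N : nat) (N_ge1 : (1 <= N)%N)
  (nu : (int -> nat) -> \bar R)
  (nu_inv : invariant_distribution R p N k nu)
  (i : int) (i_ge2 : 2 <= i) :
  (nu_phi_le N k R nu (k - i) <=
     ((r R p k i / r R p k 1) ^+ N)%:E * nu_phi_le N k R nu (k - 1))%E.
Proof.
have [nu_ge0 _ _ _] := nu_inv.
have r1_gt0 : 0 < r R p k 1 by rewrite r1E // subr_gt0.
have p_fin : \esum_(l in Nk k) (p l)%:E \is a fin_num by rewrite p_sum.
have ratio_ge0 : 0 <= (r R p k i / r R p k 1) ^+ N.
  by rewrite exprn_ge0 // divr_ge0 ?(ltW r1_gt0) // fine_ge0 // esum_ge0 // => l _; rewrite lee_fin.
rewrite !(nu_phi_leE p_ge0 N_ge1 nu_inv) -esumZl //; last first.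
  by move=> m; rewrite mule_ge0 // esum_ge0 // => xi _; exact: weight_ge0.
apply: le_esum => m Om; rewrite muleCA; apply: lee_wpmul2l => //.
by apply: event_ratio_le => //; lia.
Qed.
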